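(* Let $(R,+,0,\times,1,\leq)$ be a partially ordered unitary (nonassociative) ring. For $x \in R$ define $x^{\to 0} = 1$, $x^{\to n+1} = x\, x^{\to n}$, and $x^{\leftarrow 0} = 1$, $x^{\leftarrow n+1} = x^{\leftarrow n} x$. Suppose that: (1) $1 \geq 0$; (2) $R$ is monotone $\sigma$-complete; (3) every $x \in\, ]0,1]$ has a right-sup-almost-inverse; (4) every $x \in\, ]0,1]$ has a left-sup-almost-inverse; (5) for every $x \in [0,1[$, $\inf_{n} x^{\to n} = 0$; (6) for every $x \in [0,1[$, $\inf_{n} x^{\leftarrow n} = 0$; (7) for every $x \in\, ]0,1[$, if $x$ has a left inverse $x_L^{-1}$ and a right inverse $x_R^{-1}$ then $x_L^{-1} = x_R^{-1}$. Then every $x \in\, ]0,1]$ is invertible, with inverse $\sum_{n \in \mathbb{N}} (1-x)^{\leftarrow n} := \sup_n \sum_{k=0}^n (1-x)^{\leftarrow k}$ (which equals $\sum_{n\in\mathbb{N}}(1-x)^{\to n} := \sup_n \sum_{k=0}^n (1-x)^{\to k}$).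
   Context: Rings are not assumed associative or commutative: a ring is an abelian group $(R,+,0)$ with a biadditive multiplication; unitary means there is a two-sided multiplicative unit $1$. A partially ordered ring is a ring with a partial order $\leq$ such that $y \geq z \Rightarrow x+y \geq x+z$ and $x \geq 0, y \geq 0 \Rightarrow xy \geq 0$. Write $x<y$ for $x \le y$, $x\ne y$; intervals such as $]0,1]$, $[0,1[$, $]0,1[$ are defined with respect to $\leq$. A poset is monotone $\sigma$-complete if every increasing sequence that is bounded above has a supremum. An element $x > 0$ has a right-sup-almost-inverse if there is $y > 0$ with $xy \geq 1$, and a left-sup-almost-inverse if there is $y > 0$ with $yx \geq 1$. A left (right) inverse of $x$ is $y$ with $yx = 1$ ($xy = 1$); $x$ is invertible if it has a two-sided inverse. *)

(* Rings here are NOT assumed associative or commutative, so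
   we cannot use MathComp's ringType; we take the additive abelian group from
   MathComp's zmodType and give the multiplication, unit and order explicitly. *)
From mathcomp Require Import all_boot all_algebra.
Set Implicit Arguments. Unset Strict Implicit. Unset Printing Implicit Defensive.
Import GRing.Theory.
Local Open Scope ring_scope.

Section PORing.
Variables (R : zmodType) (mul : R -> R -> R) (one : R) (le : R -> R -> Prop).

Definition is_po_unitary_ring : Prop :=
  (forall x y z, mul (x + y) z = mul x z + mul y z) /\
  (forall x y z, mul x (y + z) = mul x y + mul x z) /\
  (forall x, mul one x = x /\ mul x one = x) /\
  (forall x, le x x) /\
  (forall x y, le x y -> le y x -> x = y) /\
  (forall x y z, le x y -> le y z -> le x z) /\
  (forall x y z, le z y -> le (x + z) (x + y)) /\
  (forall x y, le 0 x -> le 0 y -> le 0 (mul x y)).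

Definition lt (x y : R) : Prop := le x y /\ x <> y.

Fixpoint powR (x : R) (n : nat) : R :=
  match n with O => one | S m => mul x (powR x m) end.
Fixpoint powL (x : R) (n : nat) : R :=
  match n with O => one | S m => mul (powL x m) x end.

Definition is_sup (S : R -> Prop) (s : R) : Prop :=
  (forall y, S y -> le y s) /\ (forall b, (forall y, S y -> le y b) -> le s b).
Definition is_inf (S : R -> Prop) (s : R) : Prop :=
  (forall y, S y -> le s y) /\ (forall b, (forall y, S y -> le b y) -> le b s).

Definition range_seq (u : nat -> R) : R -> Prop := fun y => exists n, y = u n.

Definition monotone_sigma_complete : Prop :=
  forall u : nat -> R, (forall n, le (u n) (u n.+1)) ->
    (exists b, forall n, le (u n) b) -> exists s, is_sup (range_seq u) s.

Definition has_right_sup_almost_inverse (x : R) : Prop :=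
  exists y, lt 0 y /\ le one (mul x y).
Definition has_left_sup_almost_inverse (x : R) : Prop :=
  exists y, lt 0 y /\ le one (mul y x).

End PORing.

From mathcomp Require Import all_boot all_algebra.
Import GRing.Theory.
Set Implicit Arguments.
Unset Strict Implicit.
Unset Printing Implicit Defensive.

Local Open Scope ring_scope.

(* Put y := 1 - x and S_n := sum_{k <= n} y^{<-k}, so that S_{n+1} = 1 + S_n y
   and S_n x = 1 - y^{<-(n+1)}.  A left almost-inverse w (1 <= w x) satisfies
   1 + w y <= w, hence bounds every S_n; by sigma-completeness the S_n have a
   supremum s.  Since 1 - s x <= y^{<-k} for all k and inf_k y^{<-k} = 0, we get
   1 <= s x, hence 1 + s y <= s, while s <= 1 + s y holds termwise: so
   s = 1 + s y, i.e. s x = 1.  The opposite ring turns right almost-inverses and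
   x^{->n} into left ones and x^{<-n}, giving t with x t = 1 and t the sum of the
   x^{->n}-series; s = t by hypothesis (7), or trivially when x = 1. *)

Section POUnitaryRing.
Variables (R : zmodType) (mul : R -> R -> R) (one : R) (le : R -> R -> Prop).
Hypothesis HR : is_po_unitary_ring mul one le.

Lemma mulDl x y z : mul (x + y) z = mul x z + mul y z.
Proof. by case: HR => h _; apply: h. Qed.

Lemma mulDr x y z : mul x (y + z) = mul x y + mul x z.
Proof. by case: HR => _ [h _]; apply: h. Qed.

Lemma mul1r x : mul one x = x.
Proof. by case: HR => _ [_ [/(_ x) []]]. Qed.

Lemma mulr1 x : mul x one = x.
Proof. by case: HR => _ [_ [/(_ x) []]]. Qed.

Lemma le_anti {x y} : le x y -> le y x -> x = y.
Proof. by case: HR => _ [_ [_ [_ [h _]]]]; apply: h. Qed.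

Lemma le_trans {x y z} : le x y -> le y z -> le x z.
Proof. by case: HR => _ [_ [_ [_ [_ [h _]]]]]; apply: h. Qed.

Lemma leD2l x {y z} : le z y -> le (x + z) (x + y).
Proof. by case: HR => _ [_ [_ [_ [_ [_ [h _]]]]]]; apply: h. Qed.

Lemma mul_ge0 {x y} : le 0 x -> le 0 y -> le 0 (mul x y).
Proof. by case: HR => _ [_ [_ [_ [_ [_ [_ h]]]]]]; apply: h. Qed.

Lemma mul0r x : mul 0 x = 0.
Proof. by apply: (addrI (mul 0 x)); rewrite -mulDl !addr0. Qed.

Lemma mulrBr x y z : mul x (y - z) = mul x y - mul x z.
Proof. by rewrite -[in mul x y](subrK z y) mulDr addrK. Qed.

Lemma mulrBl x y z : mul (x - y) z = mul x z - mul y z.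
Proof. by rewrite -[in mul x z](subrK y x) mulDl addrK. Qed.

Lemma mulr_suml n (f : nat -> R) a :
  mul (\sum_(k < n) f k) a = \sum_(k < n) mul (f k) a.
Proof.
elim: n => [|n IH]; first by rewrite !big_ord0 mul0r.
by rewrite !big_ord_recr mulDl IH.
Qed.

Lemma subr_ge0 x y : le 0 (y - x) <-> le x y.
Proof.
split=> h; first by have := leD2l x h; rewrite addr0 addrC subrK.
by have := leD2l (- x) h; rewrite addNr addrC.
Qed.

Lemma ler_addr x {p} : le 0 p -> le x (x + p).
Proof. by move/(leD2l x); rewrite addr0. Qed.

Lemma lerB2l z {x y} : le x y -> le (z - y) (z - x).
Proof. by move/(leD2l (z - y - x)); rewrite subrK addrAC subrK. Qed.

Lemma ler_mul2r {a x y} : le 0 a -> le x y -> le (mul x a) (mul y a).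
Proof. by move=> a0 /subr_ge0 xy; apply/subr_ge0; rewrite -mulrBl; apply: mul_ge0. Qed.

Lemma subr_lt1 x : lt le 0 x -> lt le (one - x) one.
Proof.
case=> x0 xn0; split; first by have := lerB2l one x0; rewrite subr0.
by move=> e; apply: xn0; rewrite -(subKr one x) e subrr.
Qed.

Lemma almost_inverse_contract x v :
  le one (mul v x) -> le (one + mul v (one - x)) v.
Proof. by move/(leD2l (v - mul v x)); rewrite subrK addrC mulrBr mulr1. Qed.

Definition neumann_sum (x : R) (n : nat) : R :=
  \sum_(k < n.+1) powL mul one (one - x) k.

Lemma neumann_sum0 x : neumann_sum x 0 = one.
Proof. by rewrite /neumann_sum big_ord1. Qed.

Lemma neumann_sumSr x n :
  neumann_sum x n.+1 = neumann_sum x n + powL mul one (one - x) n.+1.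
Proof. by rewrite /neumann_sum big_ord_recr. Qed.

Lemma neumann_sumS x n :
  neumann_sum x n.+1 = one + mul (neumann_sum x n) (one - x).
Proof. by rewrite /neumann_sum big_ord_recl mulr_suml. Qed.

Lemma mul_neumann_sum x n :
  mul (neumann_sum x n) x = one - powL mul one (one - x) n.+1.
Proof.
have e := neumann_sumS x n; rewrite neumann_sumSr in e.
rewrite -[X in mul _ X](subKr one x) mulrBr mulr1.
have -> : mul (neumann_sum x n) (one - x) = neumann_sum x n + powL mul one (one - x) n.+1 - one.
  by rewrite e addrAC subrr add0r.
by rewrite opprB addrCA opprD addNKr.
Qed.

Hypothesis one_ge0 : le 0 one.

Lemma powL_ge0 x n : le 0 x -> le 0 (powL mul one x n).
Proof. by move=> x0; elim: n => //= n IH; apply: mul_ge0. Qed.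

Lemma neumann_sum_incr x n :
  le x one -> le (neumann_sum x n) (neumann_sum x n.+1).
Proof.
move=> /subr_ge0 y0; rewrite neumann_sumSr; apply: ler_addr.
exact: powL_ge0.
Qed.

Lemma neumann_sum_le x w n :
  le x one -> le 0 w -> le one (mul w x) -> le (neumann_sum x n) w.
Proof.
move=> /subr_ge0 y0 w0 /almost_inverse_contract wy.
elim: n => [|n IH]; apply: (le_trans _ wy).
  by rewrite neumann_sum0; apply: ler_addr; apply: mul_ge0.
by rewrite neumann_sumS; apply: leD2l; apply: ler_mul2r.
Qed.

Section NeumannSup.
Variables (x s : R).
Hypotheses (x0 : le 0 x) (x1 : le x one).
Hypothesis s_sup : is_sup le (range_seq (neumann_sum x)) s.

Lemma neumann_sum_le_sup n : le (neumann_sum x n) s.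
Proof. by apply: s_sup.1; exists n. Qed.

Lemma neumann_sup_ge0 : le 0 s.
Proof. by apply: le_trans one_ge0 _; rewrite -(neumann_sum0 x); apply: neumann_sum_le_sup. Qed.

Lemma one_le_mul_neumann_sup :
  is_inf le (range_seq (powL mul one (one - x))) 0 -> le one (mul s x).
Proof.
move=> [_ inf_max].
suff /inf_max : forall z, range_seq (powL mul one (one - x)) z -> le (one - mul s x) z.
  by move/subr_ge0; rewrite sub0r opprB => /subr_ge0.
move=> _ [[|k] ->].
  by have := lerB2l one (mul_ge0 neumann_sup_ge0 x0); rewrite subr0.
by have := lerB2l one (ler_mul2r x0 (neumann_sum_le_sup k)); rewrite mul_neumann_sum subKr.
Qed.

Lemma neumann_sup_fixed : le one (mul s x) -> s = one + mul s (one - x).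
Proof.
move=> /almost_inverse_contract sy; apply: le_anti sy.
have y0 : le 0 (one - x) by apply/subr_ge0.
apply: s_sup.2 => _ [[|k] ->].
  by rewrite neumann_sum0; apply: ler_addr; apply: mul_ge0 neumann_sup_ge0 y0.
by rewrite neumann_sumS; apply: leD2l; apply: ler_mul2r => //; apply: neumann_sum_le_sup.
Qed.

Lemma neumann_sup_left_inverse :
  is_inf le (range_seq (powL mul one (one - x))) 0 -> mul s x = one.
Proof.
move=> /one_le_mul_neumann_sup /neumann_sup_fixed s_fix.
by rewrite -[X in mul s X](subKr one x) mulrBr mulr1 {1}s_fix addrK.
Qed.

End NeumannSup.

Lemma neumann_left_inverse x w :
  monotone_sigma_complete le -> le 0 x -> le x one ->
  le 0 w -> le one (mul w x) ->
  is_inf le (range_seq (powL mul one (one - x))) 0 ->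
  exists s, is_sup le (range_seq (neumann_sum x)) s /\ mul s x = one.
Proof.
move=> complete x0 x1 w0 wx inf0.
have [s s_sup] : exists s, is_sup le (range_seq (neumann_sum x)) s.
  apply: complete => [n|]; first exact: neumann_sum_incr.
  by exists w => n; apply: neumann_sum_le.
by exists s; split; last exact: neumann_sup_left_inverse.
Qed.

End POUnitaryRing.

Lemma is_sup_range_ext (R : zmodType) (le : R -> R -> Prop) (u v : nat -> R) s :
  u =1 v -> is_sup le (range_seq u) s -> is_sup le (range_seq v) s.
Proof.
move=> uv [ub lub]; split=> [_ [n ->]|b vb]; first by rewrite -uv; apply: ub; exists n.
by apply: lub => _ [n ->]; rewrite uv; apply: vb; exists n.
Qed.

Lemma is_inf_range_ext (R : zmodType) (le : R -> R -> Prop) (u v : nat -> R) s :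
  u =1 v -> is_inf le (range_seq u) s -> is_inf le (range_seq v) s.
Proof.
move=> uv [lb glb]; split=> [_ [n ->]|b vb]; first by rewrite -uv; apply: lb; exists n.
by apply: glb => _ [n ->]; rewrite uv; apply: vb; exists n.
Qed.

Section OppositeRing.
Variables (R : zmodType) (mul : R -> R -> R) (one : R) (le : R -> R -> Prop).

Lemma is_po_unitary_ring_rev :
  is_po_unitary_ring mul one le -> is_po_unitary_ring (fun a b => mul b a) one le.
Proof.
case=> mDl [mDr [mul1 [refl [anti [trans [leD mul_ge0]]]]]].
split; first by move=> *; apply: mDr.
split; first by move=> *; apply: mDl.
split; first by move=> z; case: (mul1 z).
by do 4 (split; first by []); move=> a b a0 b0; apply: mul_ge0.
Qed.

Lemma powR_rev x n : powR mul one x n = powL (fun a b => mul b a) one x n.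
Proof. by elim: n => //= n ->. Qed.

Lemma neumann_sum_rev x n :
  neumann_sum (fun a b => mul b a) one x n = \sum_(k < n.+1) powR mul one (one - x) k.
Proof. by apply: eq_bigr => k _; rewrite powR_rev. Qed.

End OppositeRing.

Theorem mainTheorem12 (R : zmodType) (mul : R -> R -> R) (one : R)
  (le : R -> R -> Prop)
  (HR : is_po_unitary_ring mul one le)
  (H1 : le 0 one)
  (H2 : monotone_sigma_complete le)
  (H3 : forall x, lt le 0 x -> le x one -> has_right_sup_almost_inverse mul one le x)
  (H4 : forall x, lt le 0 x -> le x one -> has_left_sup_almost_inverse mul one le x)
  (H5 : forall x, le 0 x -> lt le x one -> is_inf le (range_seq (powR mul one x)) 0)
  (H6 : forall x, le 0 x -> lt le x one -> is_inf le (range_seq (powL mul one x)) 0)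
  (H7 : forall x, lt le 0 x -> lt le x one ->
          forall xl xr, mul xl x = one -> mul x xr = one -> xl = xr) :
  forall x, lt le 0 x -> le x one ->
    exists s,
      is_sup le (range_seq (fun n => \sum_(k < n.+1) powL mul one (one - x) k)) s /\
      is_sup le (range_seq (fun n => \sum_(k < n.+1) powR mul one (one - x) k)) s /\
      mul s x = one /\ mul x s = one.
Proof.
move=> x x_pos x1; have [x0 _] := x_pos.
have y0 : le 0 (one - x) by apply/(subr_ge0 HR).
have y1 := subr_lt1 HR x_pos.
have [w [[w0 _] wx]] := H4 x x_pos x1.
have [s [s_sup sx]] := neumann_left_inverse HR H1 H2 x0 x1 w0 wx (H6 _ y0 y1).
have HRrev := is_po_unitary_ring_rev HR.
have inf_rev := is_inf_range_ext (powR_rev mul one (one - x)) (H5 _ y0 y1).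
have [z [[z0 _] xz]] := H3 x x_pos x1.
have [t [t_sup xt]] := neumann_left_inverse HRrev H1 H2 x0 x1 z0 xz inf_rev.
have st : s = t.
  have [x_eq1|/eqP x_neq1] := eqVneq x one.
    by move: sx xt; rewrite x_eq1 /= (mulr1 HR) (mul1r HR) => -> ->.
  exact: H7 x x_pos (conj x1 x_neq1) s t sx xt.
exists s; split; first exact: s_sup.
split; first by rewrite st; apply: is_sup_range_ext t_sup => n; apply: neumann_sum_rev.
by split; last rewrite st.
Qed.
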